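(* Let $\zeta\in\mathcal{PMF}(S)$ and suppose there exist a sequence $(\xi_k)$ in $\mathcal{PMF}(S)$ converging to $\zeta$ and constants $N_0>0$, $a>0$, $b>0$ such that for every $k$ and every $0<N\le N_0$, $$aN^{h/2}\le\nu(\{\eta\in\mathcal{PMF}(S):i(\eta,\xi_k)\le N\})\le bN^{h/2}.$$ Then there exist $N_1\in(0,N_0]$, $A>0$, $B>0$ and $D_1,D_2\in\mathbb R$ such that for all $0<N\le N_1$, $$-A\ln N+D_1\le\Psi(\zeta)_{\ge N}\le -B\ln N+D_2,$$ where $\Psi(\zeta)_{\ge N}=\int_{\{\eta\in\mathcal{PMF}(S):i(\zeta,\eta)\ge N\}}i(\zeta,\eta)^{-h/2}\,d\nu(\eta)$.
   Context: $S$ is a closed connected orientable surface of genus $g\ge2$, $h=6g-6$, $\mathcal T(S)$ its Teichmüller space with base point $o$. $\mathcal{MF}(S)$ is the space of measured foliations, $\mathcal{PMF}(S)$ its projectivization, $i(\cdot,\cdot)$ the continuous geometric intersection number, $\mathrm{Ext}_o$ the extremal length at $o$, $\nu_{Th}$ the Thurston measure. Points of $\mathcal{PMF}(S)$ are identified with their representatives $\xi$ satisfying $\mathrm{Ext}_o(\xi)=1$ (so $i$ becomes a continuous function on $\mathcal{PMF}(S)\times\mathcal{PMF}(S)$), and $\nu$ is the probability measure on $\mathcal{PMF}(S)$ proportional to $A\mapsto\nu_{Th}(\{t\xi:\xi\in A,0\le t\le1\})$. *)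

From HB Require Import structures.
From mathcomp Require Import all_boot all_order all_algebra.
From mathcomp Require Import all_classical all_reals all_analysis.
Set Implicit Arguments. Unset Strict Implicit. Unset Printing Implicit Defensive.
Import Order.TTheory GRing.Theory Num.Theory numFieldNormedType.Exports.
Local Open Scope classical_set_scope.
Local Open Scope ring_scope.

Definition borelType (T : ptopologicalType) := g_sigma_algebraType (@open T).

Definition Psi_ge (R : realType) (T : ptopologicalType)
  (nu : probability (borelType T) R) (i : T -> T -> R) (h : R) (zeta : T) (N : R)
  : \bar R :=
  (\int[nu]_(eta in [set eta : borelType T | (N <= i zeta eta)%R])
      ((i zeta eta) `^ (- (h / 2)))%:E)%E.

From HB Require Import structures.
From mathcomp Require Import all_boot all_order all_algebra.
From mathcomp Require Import all_classical all_reals all_analysis.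
From mathcomp Require Import measurable_realfun.
From mathcomp Require Import ring lra.

(* Write s = h/2 and phi = i zeta.  Since i is uniformly continuous on the
   compact space T, for k large the sublevel sets of i(., xi_k) at heights N/2
   and 2N sandwich the sublevel set [phi <= N]; hence nu [phi <= N] is also
   between constant multiples of N^s.  Choose l > 1 with a l^s >= 2 b.  On the
   shell [M <= phi < l M] the integrand phi^-s is at most M^-s and the mass is
   at most b (l M)^s, so each shell contributes at most b l^s to Psi; on
   [M < phi <= l M] the integrand is at least (l M)^-s and the mass at least
   a (l M)^s - b M^s >= a (l M)^s / 2, so each shell contributes at least a/2.
   The range [N, N1] is covered by about log_l (N1 / N) shells, whence the two
   logarithmic bounds. *)

Set Implicit Arguments.
Unset Strict Implicit.
Unset Printing Implicit Defensive.
Import Order.TTheory GRing.Theory Num.Theory numFieldNormedType.Exports.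
Local Open Scope classical_set_scope.
Local Open Scope ring_scope.

Section borel_preimage.
Variables (R : realType) (T : ptopologicalType) (f : T -> R).
Hypothesis f_cont : continuous f.

Lemma continuous_borel_measurable : measurable_fun [set: borelType T] f.
Proof.
apply: (measurability _ (RGenOpens.measurableE R)) => _ [_ [x [y ->]] <-].
apply: sub_sigma_algebra; rewrite setTI.
by apply: (proj1 (continuousP f) f_cont); exact: interval_open.
Qed.

Lemma measurable_preimage (Y : set R) : measurable Y ->
  measurable [set x : borelType T | Y (f x)].
Proof.
by move=> mY; have := continuous_borel_measurable measurableT mY; rewrite setTI.
Qed.

Lemma measurable_sublevel N : measurable [set x : borelType T | f x <= N].
Proof. by have := measurable_preimage (measurable_itv `]-oo, N]); rewrite set_itvNyc. Qed.

Lemma measurable_superlevel N : measurable [set x : borelType T | N <= f x].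
Proof. by have := measurable_preimage (measurable_itv `[N, +oo[); rewrite set_itvcy. Qed.

Lemma measurable_strict_superlevel N : measurable [set x : borelType T | N < f x].
Proof. by have := measurable_preimage (measurable_itv `]N, +oo[); rewrite set_itvoy. Qed.

End borel_preimage.

Lemma exists_exprn_gt (R : realType) (l x y : R) : 1 < l -> 0 < x ->
  exists m : nat, y < x * l ^+ m.
Proof.
move=> l1 x0.
have l0 : 0 < l by apply: lt_trans l1.
have /cvgr0_norm_lt/(_ (x / (`|y| + 1))) : (GRing.exp l^-1 : R ^nat) @ \oo --> 0.
  by apply: cvg_expr; rewrite ger0_norm ?invr_ge0 ?ltW // invf_lt1.
have y1 : 0 < `|y| + 1 by rewrite ltr_pwDr.
case=> [|m _ /(_ m (leqnn m)) /=]; first by rewrite divr_gt0.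
rewrite ger0_norm ?exprn_ge0 ?invr_ge0 ?ltW // exprVn ltr_pdivlMr // mulrC.
rewrite ltr_pdivrMr ?exprn_gt0 // => ylm; exists m.
by apply: le_lt_trans ylm; rewrite (le_trans (ler_norm y)) ?lerDl.
Qed.

Lemma shell_ind (R : realType) (P : R -> Prop) (l N1 : R) : 1 < l ->
  (forall N, 0 < N -> N1 / l < N -> N <= N1 -> P N) ->
  (forall N, 0 < N -> l * N <= N1 -> P (l * N) -> P N) ->
  forall N, 0 < N -> N <= N1 -> P N.
Proof.
move=> l1 top step N N0 NN1.
have l0 : 0 < l by apply: lt_trans l1.
have [m] := exists_exprn_gt N1 l1 N0.
elim: m N N0 NN1 => [|m IH] N N0 NN1.
  by rewrite expr0 mulr1 => /lt_le_trans/(_ NN1); rewrite ltxx.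
rewrite exprS mulrA [N * l]mulrC => lNm.
have [lN|lN] := leP (l * N) N1.
  by apply: step => //; apply: IH; rewrite ?mulr_gt0.
by apply: top => //; rewrite ltr_pdivrMr // mulrC.
Qed.

Section logarithmic_growth.
Variables (R : realType) (l N1 : R).
Hypothesis l_gt1 : 1 < l.

Let lnl_gt0 : 0 < ln l. Proof. exact: ln_gt0. Qed.
Let l_gt0 : 0 < l. Proof. by apply: lt_trans l_gt1. Qed.

Lemma ln_growth_upper (F : R -> \bar R) (C K : R) : 0 <= C ->
  (forall M, 0 < M -> l * M <= N1 -> (F M <= C%:E + F (l * M)%R)%E) ->
  (forall M, N1 / l < M -> M <= N1 -> (F M <= K%:E)%E) ->
  forall N, 0 < N -> N <= N1 -> (F N <= (C / ln l * (ln N1 - ln N) + K)%:E)%E.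
Proof.
move=> C0 step top; apply: shell_ind l_gt1 _ _ => N.
  move=> N0 N1N NN1; apply: (le_trans (top N N1N NN1)); rewrite lee_fin lerDr.
  apply: mulr_ge0; first by rewrite divr_ge0 // ltW.
  by rewrite subr_ge0 ler_ln ?posrE // (lt_le_trans N0).
move=> N0 lN FlN; apply: (le_trans (step N N0 lN)); apply: le_trans (leeD2l _ FlN) _.
rewrite -EFinD lee_fin [ln (l * N)]lnM ?posrE // opprD.
by rewrite !mulrDr !mulrN divfK ?gt_eqF //; lra.
Qed.

Lemma ln_growth_lower (G : R -> \bar R) (c : R) : 0 <= c ->
  (forall M, 0 < M -> l * M <= N1 -> (c%:E + G (l * M)%R <= G M)%E) ->
  (forall M, N1 / l < M -> M <= N1 -> (0 <= G M)%E) ->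
  forall N, 0 < N -> N <= N1 -> ((c / ln l * (ln (N1 / l) - ln N))%:E <= G N)%E.
Proof.
move=> c0 step top; apply: shell_ind l_gt1 _ _ => N.
  move=> N0 N1N NN1; apply: le_trans (top N N1N NN1); rewrite lee_fin.
  have N1l0 : 0 < N1 / l by rewrite divr_gt0 // (lt_le_trans N0).
  apply: mulr_ge0_le0; first by rewrite divr_ge0 // ltW.
  by rewrite subr_le0 ler_ln ?posrE // ltW.
move=> N0 lN GlN; apply: le_trans (step N N0 lN); apply: le_trans (leeD2l _ GlN).
rewrite -EFinD lee_fin [ln (l * N)]lnM ?posrE // opprD.
by rewrite !mulrDr !mulrN divfK ?gt_eqF //; lra.
Qed.

End logarithmic_growth.

Section ge0_integral_bounds.
Context d (T : measurableType d) (R : realType).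
Variables (mu : {measure set T -> \bar R}) (D : set T) (f : T -> \bar R).
Hypotheses (mD : measurable D) (mf : measurable_fun D f).
Hypothesis f_ge0 : forall x, D x -> (0 <= f x)%E.

Lemma ge0_integral_le_cst (c : R) : (forall x, D x -> (f x <= c%:E)%E) ->
  (\int[mu]_(x in D) f x <= c%:E * mu D)%E.
Proof.
by move=> fc; rewrite -integral_cst //; apply: ge0_le_integral.
Qed.

Lemma cst_le_ge0_integral (c : R) : 0 <= c -> (forall x, D x -> (c%:E <= f x)%E) ->
  (c%:E * mu D <= \int[mu]_(x in D) f x)%E.
Proof.
move=> c0 cf; rewrite -integral_cst //.
by apply: ge0_le_integral => // x _; rewrite lee_fin.
Qed.

Lemma ge0_integral_setD_add (B : set T) : measurable B -> B `<=` D ->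
  (\int[mu]_(x in D) f x = \int[mu]_(x in D `\` B) f x + \int[mu]_(x in B) f x)%E.
Proof.
move=> mB BD; rewrite -{1}(setDKU BD) ge0_integral_setU //.
- exact: measurableD.
- by rewrite setDKU.
- by rewrite setDKU.
- by rewrite setDE disj_set2E -setIA setICl setI0.
Qed.

End ge0_integral_bounds.

Lemma ler_powRN2r (R : realType) (s x y : R) : 0 <= s -> 0 < x -> x <= y ->
  y `^ (- s) <= x `^ (- s).
Proof.
move=> s0 x0 xy; have y0 : 0 < y by apply: lt_le_trans xy.
rewrite !powRN lef_pV2 ?posrE ?powR_gt0 //.
by rewrite (ge0_ler_powR s0) // nnegrE ltW.
Qed.

Lemma exists_gt1_powR_ge (R : realType) (s c : R) : 0 < s ->
  exists l, 1 < l /\ c <= l `^ s.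
Proof.
move=> s0; have c2 : 1 < 2 + `|c| by rewrite -addrA ltr_pwDr ?addr_ge0.
have c0 : 0 <= 2 + `|c| by apply: le_trans (ltW c2).
exists ((2 + `|c|) `^ s^-1); split.
  have si : 0 < s^-1 by rewrite invr_gt0.
  by have := gt0_ltr_powR si ler01 c0 c2; rewrite powR1.
rewrite -powRrM mulVf ?gt_eqF // powRr1 //.
by rewrite (le_trans (ler_norm c)) // lerDr.
Qed.

Definition power_law_mass (R : realType) (T : ptopologicalType)
    (nu : probability (borelType T) R) (phi : T -> R) (s a b N1 : R) :=
  forall N, 0 < N -> N <= N1 ->
    ((a * N `^ s)%:E <= nu [set x : borelType T | (phi x <= N)%R])%E /\
    (nu [set x : borelType T | (phi x <= N)%R] <= (b * N `^ s)%:E)%E.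

Definition level_integral (R : realType) (T : ptopologicalType)
    (nu : probability (borelType T) R) (phi : T -> R) (s N : R) : \bar R :=
  \int[nu]_(x in [set x : borelType T | N <= phi x]) (phi x `^ (- s))%:E.

Section level_integral.
Variables (R : realType) (T : ptopologicalType) (nu : probability (borelType T) R).
Variables (phi : T -> R) (s : R).
Hypotheses (phi_cont : continuous phi) (s_gt0 : 0 < s).

Let f x := (phi x `^ (- s))%:E.

Let f_ge0 x : (0 <= f x)%E. Proof. by rewrite lee_fin powR_ge0. Qed.

Let measurable_f (D : set (borelType T)) : measurable_fun D f.
Proof.
rewrite /f; apply/measurable_EFinP.
exact: measurableT_comp (measurable_powR (- s))
  (measurable_funS measurableT (subsetT D) (continuous_borel_measurable phi_cont)).
Qed.

Let measurable_ge := measurable_superlevel phi_cont.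
Let measurable_gt := measurable_strict_superlevel phi_cont.
Let measurable_le := measurable_sublevel phi_cont.

(* The lower bound is proved for integrals over [M < phi], whose shells
   [M < phi <= l M] are differences of two sublevel sets. *)
Let strict_level_integral N :=
  (\int[nu]_(x in [set x : borelType T | (N < phi x)%R]) f x)%E.

Lemma level_integral_le_powRN N : 0 < N -> (level_integral nu phi s N <= (N `^ (- s))%:E)%E.
Proof.
move=> N0; have f_le x : N <= phi x -> (f x <= (N `^ (- s))%:E)%E.
  by move=> Nx; rewrite lee_fin; apply: ler_powRN2r (ltW s_gt0) N0 Nx.
rewrite /level_integral; apply: le_trans (ge0_integral_le_cst nu (measurable_ge N)
  (@measurable_f _) (fun x _ => f_ge0 x) f_le) _.
rewrite -[leRHS]mule1 lee_wpmul2l ?lee_fin ?powR_ge0 //.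
exact: probability_le1.
Qed.

Let strict_le_level_integral N : (strict_level_integral N <= level_integral nu phi s N)%E.
Proof. by apply: ge0_subset_integral => // x /= /ltW. Qed.

Variables (a b N1 : R).
Hypothesis mass : power_law_mass nu phi s a b N1.

Lemma level_integral_shell_le l M : 1 <= l -> 0 < M -> l * M <= N1 ->
  (level_integral nu phi s M <= (b * l `^ s)%:E + level_integral nu phi s (l * M))%E.
Proof.
move=> l1 M0 lMN1; have l0 : 0 < l by apply: lt_le_trans l1.
have MlM : M <= l * M by rewrite ler_peMl // ltW.
rewrite /level_integral (ge0_integral_setD_add nu (measurable_ge M) (@measurable_f _)
  (fun x _ => f_ge0 x) (measurable_ge (l * M))); last by move=> x /=; apply: le_trans.
have f_le x : M <= phi x -> (f x <= (M `^ (- s))%:E)%E.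
  by move=> Mx; rewrite lee_fin; apply: ler_powRN2r (ltW s_gt0) M0 Mx.
have mshell := measurableD (measurable_ge M) (measurable_ge (l * M)).
apply: leeD2r; apply: le_trans (ge0_integral_le_cst nu mshell (@measurable_f _)
  (fun x _ => f_ge0 x) (fun x Dx => f_le x Dx.1)) _.
have nu_shell : (nu ([set x | M <= phi x] `\` [set x | l * M <= phi x])%R <=
    nu [set x | phi x <= l * M]%R)%E.
  apply: le_measure; rewrite ?inE //.
  by move=> x [_ /negP]; rewrite -ltNge => /ltW.
have Ms_ge0 : (0 <= (M `^ (- s))%:E)%E by rewrite lee_fin powR_ge0.
apply: le_trans (lee_wpmul2l Ms_ge0 nu_shell) _.
apply: le_trans (lee_wpmul2l Ms_ge0 (proj2 (mass (mulr_gt0 l0 M0) lMN1))) _.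
rewrite -EFinM lee_fin (powRM _ (ltW l0) (ltW M0)) powRN mulrC -!mulrA.
by rewrite mulfV ?mulr1 // gt_eqF ?powR_gt0.
Qed.

Lemma strict_level_integral_shell_ge l M : 1 <= l -> 2 * b <= a * l `^ s ->
  0 < M -> l * M <= N1 ->
  ((a / 2)%:E + strict_level_integral (l * M)%R <= strict_level_integral M)%E.
Proof.
move=> l1 lb M0 lMN1; have l0 : 0 < l by apply: lt_le_trans l1.
have MlM : M <= l * M by rewrite ler_peMl // ltW.
have lM0 : 0 < l * M by rewrite mulr_gt0.
pose shell := [set x : borelType T | M < phi x] `\` [set x | l * M < phi x].
have mshell : measurable shell by exact: measurableD.
have shell_mass : (((a / 2) * (l * M) `^ s)%:E <= nu shell)%E.
  have nu_split : nu [set x | phi x <= l * M]%R = (nu [set x | phi x <= M]%R + nu shell)%E.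
    rewrite -measureU //.
    + congr (nu _); apply/seteqP; split => x /=.
        case: (leP (phi x) M) => xM xlM; first by left.
        by right; split => //; apply/negP; rewrite -leNgt.
      by case=> [xM|[_ /negP]]; [apply: le_trans MlM | rewrite -leNgt].
    + by apply/seteqP; split => // x [/= xM [/lt_le_trans/(_ xM)]]; rewrite ltxx.
  (* 2 b <= a l^s: the mass b M^s of [phi <= M] is at most half the lower
     bound a (l M)^s on the mass of [phi <= l M]. *)
  have [+ _] := mass lM0 lMN1; have [_] := mass M0 (le_trans MlM lMN1).
  rewrite nu_split -[nu shell]fineK ?fin_num_measure //.
  rewrite -[nu [set x | phi x <= M]%R]fineK ?fin_num_measure //.
  rewrite -EFinD !lee_fin (powRM _ (ltW l0) (ltW M0)) => uM lMu.
  have : 0 <= a * l `^ s - 2 * b by rewrite subr_ge0.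
  move/mulr_ge0/(_ (powR_ge0 M s)); nra.
have f_ge x : shell x -> (((l * M) `^ (- s))%:E <= f x)%E.
  move=> [/= Mx /negP]; rewrite -leNgt => xlM; rewrite lee_fin.
  by apply: ler_powRN2r (ltW s_gt0) (lt_trans M0 Mx) xlM.
rewrite /strict_level_integral (ge0_integral_setD_add nu (measurable_gt M) (@measurable_f _)
  (fun x _ => f_ge0 x) (measurable_gt (l * M))); last by move=> x /=; apply: le_lt_trans.
apply: leeD2r; apply: le_trans
  (cst_le_ge0_integral nu mshell (@measurable_f _) (powR_ge0 _ _) f_ge).
have lMs_ge0 : (0 <= ((l * M) `^ (- s))%:E)%E by rewrite lee_fin powR_ge0.
apply: le_trans (lee_wpmul2l lMs_ge0 shell_mass).
by rewrite -EFinM lee_fin powRN mulrCA mulVf ?mulr1 // gt_eqF ?powR_gt0.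
Qed.

Theorem level_integral_ln_bounds : 0 < a -> 0 < b -> 0 < N1 ->
  exists A B D1 D2 : R, [/\ 0 < A, 0 < B & forall N, 0 < N -> N <= N1 ->
    ((- A * ln N + D1)%:E <= level_integral nu phi s N)%E /\
    (level_integral nu phi s N <= (- B * ln N + D2)%:E)%E].
Proof.
move=> a_gt0 b_gt0 N1_gt0.
have [l [l_gt1 l_big]] := exists_gt1_powR_ge (2 * b / a) s_gt0.
have la_big : 2 * b <= a * l `^ s by rewrite -ler_pdivrMl // mulrC.
have lnl_gt0 : 0 < ln l by exact: ln_gt0.
have l_gt0 : 0 < l by apply: lt_trans l_gt1.
pose c := a / 2; pose C := b * l `^ s; pose K := (N1 / l) `^ (- s).
exists (c / ln l), (C / ln l), (c / ln l * ln (N1 / l)), (C / ln l * ln N1 + K).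
split; [by rewrite !divr_gt0 | by rewrite divr_gt0 // mulr_gt0 // powR_gt0 |].
move=> N N0 NN1; split.
  rewrite (_ : - (c / ln l) * ln N + _ = c / ln l * (ln (N1 / l) - ln N)); last by ring.
  apply: le_trans (strict_le_level_integral N).
  apply: (ln_growth_lower l_gt1) => //; first by rewrite divr_ge0 ?ltW.
    by move=> M M0 lM; exact: strict_level_integral_shell_ge (ltW l_gt1) la_big M0 lM.
  by move=> M _ _; apply: integral_ge0 => x _; exact: f_ge0.
rewrite (_ : - (C / ln l) * ln N + _ = C / ln l * (ln N1 - ln N) + K); last by ring.
apply: (ln_growth_upper l_gt1) => //; first by rewrite mulr_ge0 ?powR_ge0 ?ltW.
  by move=> M M0 lM; exact: level_integral_shell_le (ltW l_gt1) M0 lM.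
move=> M N1lM _; have M0 : 0 < M by apply: lt_trans N1lM; rewrite divr_gt0.
apply: le_trans (level_integral_le_powRN M0) _.
by rewrite lee_fin; apply: ler_powRN2r (ltW s_gt0) _ (ltW N1lM); rewrite divr_gt0.
Qed.

End level_integral.

Lemma continuous_slice (T U V : topologicalType) (i : T -> U -> V) (c : U) :
  continuous (fun p : T * U => i p.1 p.2) -> continuous (fun x => i x c).
Proof.
move=> i_cont x; apply: (continuous_comp (f := fun x => (x, c))
  (g := fun p : T * U => i p.1 p.2)); last exact: i_cont.
by apply: cvg_pair; [exact: cvg_id | exact: cvg_cst].
Qed.

Lemma near_unif_slice (R : realType) (T : ptopologicalType) (cT : compact [set: T])
    (i : T -> T -> R) (i_cont : continuous (fun p : T * T => i p.1 p.2))
    (zeta : T) (e : R) : 0 < e ->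
  \forall z \near zeta, forall eta, `|i eta z - i eta zeta| < e.
Proof.
move=> e0; have e2 : 0 < e / 2 by rewrite divr_gt0.
have close (eta : T) : \forall eta' \near eta & z \near zeta, `|i eta' z - i eta' zeta| < e.
  have /cvgrPdist_lt/(_ _ e2) [[U V] /= [Ueta Vzeta] UV] := i_cont (eta, zeta).
  exists (U, V) => //= -[eta' z] /= [Ueta' Vz].
  have h1 := UV (eta', z) (conj Ueta' Vz).
  have h2 := UV (eta', zeta) (conj Ueta' (nbhs_singleton Vzeta)).
  rewrite /= distrC in h1; have := ltrD h1 h2; rewrite -splitr; apply: le_lt_trans.
  by rewrite -[i eta' z - _](subrKA (i eta zeta)); exact: ler_normD.
have := proj1 (compact_near_coveringP _) cT T (nbhs zeta)
  (fun z eta => `|i eta z - i eta zeta| < e) _ (fun eta _ => close eta).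
by move/(_ (nbhs_filter zeta)); apply: filterS => z Hz eta; exact: Hz.
Qed.

Lemma power_law_mass_cvg (R : realType) (T : ptopologicalType) (cT : compact [set: T])
    (nu : probability (borelType T) R) (i : T -> T -> R)
    (i_cont : continuous (fun p : T * T => i p.1 p.2))
    (zeta : T) (xi : nat -> T) (s a b N0 : R) :
  xi @ \oo --> zeta ->
  (forall k, power_law_mass nu (fun eta => i eta (xi k)) s a b N0) ->
  power_law_mass nu (fun eta => i eta zeta) s (a / 2 `^ s) (b * 2 `^ s) (N0 / 2).
Proof.
move=> xi_cvg mass N N_gt0 N_le; have N2 : 0 < N / 2 by rewrite divr_gt0.
have msub c := measurable_sublevel (continuous_slice (c := c) i_cont).
have [k _ /(_ k (leqnn k)) /= close] := xi_cvg _ (near_unif_slice cT i_cont zeta N2).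
have [lo _] := mass k (N / 2) N2 ltac:(lra).
have [_ hi] := mass k (2 * N) ltac:(lra) ltac:(lra).
have two_gt0 : 0 < 2 :> R by [].
split.
  apply: le_trans (le_trans lo (le_measure _ _ _ _)); rewrite ?inE //.
    have -> : N `^ s = (N / 2) `^ s * 2 `^ s.
      by rewrite -(powRM _ (ltW N2) (ltW two_gt0)) divfK ?pnatr_eq0.
    by rewrite lee_fin mulrCA divfK ?[_ * a]mulrC // gt_eqF // powR_gt0.
  by move=> eta /= etaN; have := close eta; rewrite ltr_distlC; lra.
apply: le_trans (le_measure _ _ _ _) (le_trans hi _); rewrite ?inE //.
  by move=> eta /= etaN; have := close eta; rewrite ltr_distlC; lra.
by rewrite lee_fin (powRM _ (ltW two_gt0) (ltW N_gt0)) mulrA.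
Qed.

Theorem mainTheorem12 (R : realType) (g : nat) (hg : (2 <= g)%N)
  (T : ptopologicalType) (hT : hausdorff_space T) (cT : compact [set: T])
  (nu : probability (borelType T) R) (i : T -> T -> R)
  (i_cont : continuous (fun p : T * T => i p.1 p.2))
  (i_ge0 : forall x y, 0 <= i x y)
  (i_sym : forall x y, i x y = i y x)
  (zeta : T) (xi : nat -> T) (N0 a b : R) :
  let h : R := 6 * g%:R - 6 in
  xi @ \oo --> zeta ->
  0 < N0 -> 0 < a -> 0 < b ->
  (forall (k : nat) (N : R), 0 < N -> N <= N0 ->
     ((a * N `^ (h / 2))%:E <= nu [set eta : borelType T | (i eta (xi k) <= N)%R])%E /\
     (nu [set eta : borelType T | (i eta (xi k) <= N)%R] <= (b * N `^ (h / 2))%:E)%E) ->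
  exists N1 A B D1 D2 : R,
    [/\ 0 < N1, N1 <= N0, 0 < A, 0 < B &
      forall N : R, 0 < N -> N <= N1 ->
        ((- A * ln N + D1)%:E <= Psi_ge nu i h zeta N)%E /\
        (Psi_ge nu i h zeta N <= (- B * ln N + D2)%:E)%E].
Proof.
move=> h xi_cvg N0_gt0 a_gt0 b_gt0 xi_mass.
have h_gt0 : 0 < h / 2.
  have : 2 <= g%:R :> R by rewrite ler_nat.
  by rewrite /h; lra.
have zeta_mass := power_law_mass_cvg cT i_cont xi_cvg xi_mass.
have [|||A [B [D1 [D2 [A_gt0 B_gt0 ln_bounds]]]]] :=
  level_integral_ln_bounds (continuous_slice (c := zeta) i_cont) h_gt0 zeta_mass.
- by rewrite divr_gt0 ?powR_gt0.
- by rewrite mulr_gt0 ?powR_gt0.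
- by rewrite divr_gt0.
exists (N0 / 2), A, B, D1, D2; split => //; [lra | lra |].
have i_zeta : i zeta = (fun eta => i eta zeta) by apply/funext => eta; exact: i_sym.
by rewrite -i_zeta in ln_bounds.
Qed.
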